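(* Fix integers $k \ge 3$ and $i \in \{2,\dots,k-1\}$, and let $T = \{1,\dots,k\}\setminus\{i\}$. Let $d \ge 1$ and $x \in \mathbb{Z}_k^d$. Then $\mathbb{Z}_k^d \setminus \{x\}$ is a disjoint union of copies of $T$ in $\mathbb{Z}_k^d$.
   Context: $\mathbb{Z}_k$ denotes the integers modulo $k$. A copy of $T$ in $\mathbb{Z}_k^d$ is a set of the form $\{x + j e_s : j \in \mathbb{Z}_k,\ j \ne j_0\}$ for some $x \in \mathbb{Z}_k^d$, $s \in \{1,\dots,d\}$ ($e_s$ the $s$-th unit vector) and $j_0 \in \mathbb{Z}_k$, i.e. a coordinate line with one point removed. *)

From HB Require Import structures.
From mathcomp Require Import all_boot all_order all_algebra.
Set Implicit Arguments. Unset Strict Implicit. Unset Printing Implicit Defensive.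
Import GRing.Theory.
Local Open Scope ring_scope.

(* Points of Z_k^d: functions from coordinates 'I_d to 'Z_k.
   ('Z_k is Z/kZ for k >= 2; the theorem assumes k >= 3.) *)
Definition point (k d : nat) := {ffun 'I_d -> 'Z_k}.

Definition shift_along (k d : nat) (x : point k d) (s : 'I_d) (j : 'Z_k)
  : point k d :=
  [ffun t => x t + (if t == s then j else 0)].

Definition copy_of_T (k d : nat) (x : point k d) (s : 'I_d) (j0 : 'Z_k)
  : {set point k d} :=
  [set shift_along x s j | j : 'Z_k & j != j0].

Definition is_copy_of_T (k d : nat) (C : {set point k d}) : Prop :=
  exists (x : point k d) (s : 'I_d) (j0 : 'Z_k), C = copy_of_T x s j0.

From mathcomp Require Import all_boot all_order all_algebra.
Import GRing.Theory.
Set Implicit Arguments. Unset Strict Implicit.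

(* Every y <> x is sorted by the last coordinate s in which it differs from x
   and by the point b obtained from y by resetting that coordinate to x s.
   The points with the same (s, b) are exactly the b + j e_s with j <> 0: a
   coordinate line through b with the single point b removed. *)

Section LastDifference.
Variables (k d : nat) (x : point k d).
Local Open Scope ring_scope.
Implicit Types (y z b : point k d) (s t u : 'I_d).

Definition last_diff_at y s :=
  (y s != x s) && [forall u : 'I_d, (s < u)%N ==> (y u == x u)].

Definition last_diff y : option 'I_d := [pick s | last_diff_at y s].

Definition reset_last_diff y : point k d :=
  [ffun t => if last_diff y == Some t then x t else y t].

Definition line_key y := (last_diff y, reset_last_diff y).

Lemma last_diff_at_uniq y s t : last_diff_at y s -> last_diff_at y t -> s = t.
Proof.
move=> /andP[ys /forallP ys_last] /andP[yt /forallP yt_last].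
apply/val_inj/eqP; rewrite eqn_leq.
apply/andP; split; rewrite leqNgt; apply/negP => lt_st.
- by move: (yt_last s); rewrite lt_st (negbTE ys).
- by move: (ys_last t); rewrite lt_st (negbTE yt).
Qed.

Lemma exists_last_diff_at y : y != x -> exists s, last_diff_at y s.
Proof.
move=> neq_yx.
have [t yt] : exists t, y t != x t.
  apply/existsP; apply: contraR neq_yx => /existsPn same.
  by apply/eqP/ffunP => t; apply/eqP; rewrite -[_ == _]negbK same.
have [s ys s_max] := @arg_maxnP _ t (fun t => y t != x t) val yt.
exists s; rewrite /last_diff_at ys; apply/forallP => u; apply/implyP.
by apply: contraLR => yu; rewrite -leqNgt; exact: s_max.
Qed.

Lemma last_diffP y s : last_diff_at y s -> last_diff y = Some s.
Proof.
move=> ys; rewrite /last_diff; case: pickP => [t yt | none].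
  by rewrite (last_diff_at_uniq yt ys).
by move: (none s); rewrite ys.
Qed.

Lemma reset_last_diffE y s :
  last_diff_at y s -> reset_last_diff y = shift_along y s (x s - y s).
Proof.
move=> ys; apply/ffunP => t; rewrite !ffunE (last_diffP ys).
case: (eqVneq t s) => [-> | ts]; first by rewrite !eqxx addrC subrK.
by rewrite addr0; case: eqP => // -[st]; rewrite st eqxx in ts.
Qed.

Lemma reset_last_diff_tail y s u :
  last_diff_at y s -> (s <= u)%N -> reset_last_diff y u = x u.
Proof.
move=> ys le_su; rewrite (reset_last_diffE ys) !ffunE.
case: (eqVneq u s) => [-> | us]; first by rewrite addrC subrK.
rewrite addr0; case/andP: ys => _ /forallP /(_ u) /implyP y_tail; apply/eqP/y_tail.
rewrite ltn_neqAle le_su andbT; apply: contra us => /eqP eq_su.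
by apply/eqP/val_inj.
Qed.

Lemma last_diff_at_shift b s j :
  (forall u, (s <= u)%N -> b u = x u) ->
  last_diff_at (shift_along b s j) s = (j != 0).
Proof.
move=> b_tail; rewrite /last_diff_at !ffunE eqxx b_tail // addrC -subr_eq0 addrK.
case: (j != 0) => //=; apply/forallP => u; apply/implyP => lt_su.
rewrite ffunE.
have -> : (u == s) = false by apply: contraTF lt_su => /eqP ->; rewrite ltnn.
by rewrite addr0 b_tail // ltnW.
Qed.

Lemma line_key_shift b s j :
  (forall u, (s <= u)%N -> b u = x u) -> j != 0 ->
  line_key (shift_along b s j) = (Some s, b).
Proof.
move=> b_tail j0; have bs := last_diff_at_shift j b_tail; rewrite j0 in bs.
rewrite /line_key (last_diffP bs) (reset_last_diffE bs); congr pair.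
apply/ffunP => t; rewrite !ffunE.
case: (eqVneq t s) => [-> | _]; last by rewrite !addr0.
by rewrite eqxx b_tail // addrC subrK.
Qed.

Lemma line_key_class y s : last_diff_at y s ->
  [set z in [set~ x] | line_key y == line_key z] =
  copy_of_T (reset_last_diff y) s 0.
Proof.
move=> ys; have y_tail := reset_last_diff_tail ys.
apply/setP => z; rewrite !inE; apply/andP/imsetP => [[neq_zx /eqP/esym same] | [j]].
  have [t zt] := exists_last_diff_at neq_zx.
  move: same; rewrite /line_key (last_diffP zt) (last_diffP ys) => -[ts reset_zy].
  rewrite {t}ts in zt.
  exists (z s - x s); first by rewrite inE subr_eq0; case/andP: zt.
  apply/ffunP => t; rewrite -reset_zy (reset_last_diffE zt) !ffunE.
  by case: eqVneq => [-> | _]; rewrite ?addr0 // [_ + (x s - z s)]addrC subrK addrC subrK.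
rewrite inE => j0 ->; split; last by rewrite line_key_shift // /line_key (last_diffP ys).
have := last_diff_at_shift j y_tail; rewrite j0 => /andP[zs _].
by apply: contraNneq zs => ->.
Qed.

End LastDifference.

Theorem proposition4 (k i d : nat) (hk : 3 <= k) (hi1 : 2 <= i) (hi2 : i <= k - 1)
  (hd : 1 <= d) (x : point k d) :
  exists P : {set {set point k d}},
    partition P [set~ x] /\ (forall C, C \in P -> is_copy_of_T C).
Proof.
exists (preim_partition (line_key x) [set~ x]).
split; first exact: preim_partitionP.
move=> C /imsetP[y]; rewrite !inE => neq_yx ->.
have [s ys] := exists_last_diff_at neq_yx.
by exists (reset_last_diff x y), s, 0%R; exact: line_key_class ys.
Qed.
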